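(* Let $R$ be a ring and $I,J$ ideals of $R$ with $I\cap J=0$. Then $[I]\cap[J]\subseteq\mathrm{Nil}_2(R)$.
   Context: Rings are commutative with unit. $\widehat\Theta(R)$ is the free monoid on $\mathrm{Der}(R)$, acting on $R$ by composition of derivations. For an ideal $I$, $[I]:=\sum_{\theta\in\widehat\Theta(R)}\theta(I)$, the smallest ideal containing $I$ stable under all derivations of $R$. $\mathrm{Nil}_2(R):=\{x\in R: x^2=0\}$. *)

From HB Require Import structures.
From mathcomp Require Import all_boot all_order all_algebra.
Set Implicit Arguments. Unset Strict Implicit. Unset Printing Implicit Defensive.
Import GRing.Theory.
Local Open Scope ring_scope.

(* Rings are commutative with unit (the zero ring allowed). *)

Definition is_ideal (R : comPzRingType) (I : R -> Prop) : Prop :=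
  I 0 /\ (forall x y, I x -> I y -> I (x + y)) /\ (forall r x, I x -> I (r * x)).

Definition is_der (R : comPzRingType) (D : R -> R) : Prop :=
  (forall x y, D (x + y) = D x + D y) /\ (forall x y, D (x * y) = x * D y + D x * y).

(* Action of a word theta = [D1; ...; Dk] of the free monoid on Der(R):
   theta(x) = D1 (D2 (... (Dk x))); the empty word acts as the identity. *)
Definition word_act (R : comPzRingType) (theta : seq (R -> R)) (x : R) : R :=
  foldr (fun D y => D y) x theta.

Fixpoint is_der_word (R : comPzRingType) (theta : seq (R -> R)) : Prop :=
  if theta is D :: theta' then is_der D /\ is_der_word theta' else True.

(* [I] := sum over theta in the free monoid on Der(R) of theta(I):
   the set of finite sums of elements theta(x), theta a word of derivations, x in I. *)
Inductive bracket (R : comPzRingType) (I : R -> Prop) : R -> Prop :=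
| bracket0 : bracket I 0
| bracketS : forall theta x y, is_der_word theta -> I x -> bracket I y ->
    bracket I (word_act theta x + y).

Definition Nil2 (R : comPzRingType) (x : R) : Prop := x ^+ 2 = 0.

From mathcomp Require Import all_boot all_order all_algebra.
Local Open Scope ring_scope.
Import GRing.Theory.

(* For [a] in [I] and [b] in [J], every product [theta(a) * phi(b)] vanishes, by
   induction on the total length of the words: peeling a derivation [D] off
   [theta] with the Leibniz rule moves it onto the other factor,
   [D u * v = D (u * v) - u * D v], and the first term is [D 0 = 0] by the
   induction hypothesis.  Iterating, the product equals, up to sign, [a]
   times something, so it lies in [I]; symmetrically it lies in [J], hence it
   is [0].  Expanding the sums defining the brackets, [[I] * [J] = 0]. *)

Section DerivationWords.
Set Implicit Arguments. Unset Strict Implicit.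

Variable R : comPzRingType.
Implicit Types (I J : R -> Prop) (D : R -> R) (theta phi : seq (R -> R)).

Lemma der0 D : is_der D -> D 0 = 0.
Proof.
case=> Dadd _; apply/esym/(@addrI _ (D 0)).
by rewrite -Dadd !addr0.
Qed.

Lemma der_mul_shift D u v : is_der D -> D u * v = D (u * v) - u * D v.
Proof. by case=> _ ->; rewrite addrC addKr. Qed.

Lemma idealN I x : is_ideal I -> I x -> I (- x).
Proof. by case=> _ [_ Imul] Ix; rewrite -mulN1r; apply: Imul. Qed.

Lemma ideal_word_mul I a b n : is_ideal I -> I a ->
  (forall theta phi, (size theta + size phi < n)%N ->
     is_der_word theta -> is_der_word phi ->
     word_act theta a * word_act phi b = 0) ->
  forall theta phi, (size theta + size phi = n)%N ->
    is_der_word theta -> is_der_word phi ->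
    I (word_act theta a * word_act phi b).
Proof.
move=> idI Ia shorter_eq0 theta; have [_ [_ Imul]] := idI.
elim: theta => [|D theta IH] phi /= size_n theta_der phi_der.
  by rewrite mulrC; apply: Imul.
case: theta_der => D_der theta_der.
rewrite der_mul_shift // shorter_eq0 ?der0 ?sub0r //; last by rewrite -size_n addSn.
apply: idealN => //.
by apply: (IH (D :: phi)) => //; rewrite addnS.
Qed.

Lemma word_mul_eq0 I J a b : is_ideal I -> is_ideal J ->
  (forall x, I x -> J x -> x = 0) -> I a -> J b ->
  forall theta phi, is_der_word theta -> is_der_word phi ->
    word_act theta a * word_act phi b = 0.
Proof.
move=> idI idJ IJ0 Ia Jb theta phi.
have [n] := ubnP (size theta + size phi); elim: n theta phi => // n IH theta phi.
rewrite ltnS leq_eqVlt => /orP [/eqP size_n | ]; last exact: IH.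
move=> theta_der phi_der; apply: IJ0.
  exact: (ideal_word_mul idI Ia IH size_n).
have shorter_eq0 phi' theta' : (size phi' + size theta' < n)%N ->
    is_der_word phi' -> is_der_word theta' ->
    word_act phi' b * word_act theta' a = 0.
  by move=> size_lt *; rewrite mulrC IH // addnC.
rewrite mulrC; apply: (ideal_word_mul idJ Jb shorter_eq0) => //.
by rewrite addnC.
Qed.

Lemma bracket_mul_eq0 I J :
  (forall theta phi a b, is_der_word theta -> is_der_word phi -> I a -> J b ->
     word_act theta a * word_act phi b = 0) ->
  forall u v, bracket I u -> bracket J v -> u * v = 0.
Proof.
move=> words_eq0 u v Bu Bv.
elim: Bu => [|theta a u' theta_der Ia _ IHu]; first by rewrite mul0r.
rewrite mulrDl IHu addr0.
elim: Bv => [|phi b v' phi_der Jb _ IHv]; first by rewrite mulr0.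
by rewrite mulrDr IHv addr0 words_eq0.
Qed.

End DerivationWords.

Theorem corollaryA16 (R : comPzRingType) (I J : R -> Prop) :
  is_ideal I -> is_ideal J -> (forall x, I x -> J x -> x = 0) ->
  forall x, bracket I x -> bracket J x -> Nil2 x.
Proof.
move=> idI idJ IJ0 x BIx BJx; rewrite /Nil2 expr2.
apply: (bracket_mul_eq0 _ BIx BJx) => theta phi a b theta_der phi_der Ia Jb.
exact: (word_mul_eq0 idI idJ IJ0).
Qed.
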